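(* Let $F$ be a periodic fabric of order greater than $4$ whose side-preserving symmetry group $H_1$ is generated by side-preserving glide-reflections and is transitive on the set of all strands, and suppose $F$ is perfectly coloured by thin striping. Let $P$ be the resulting pattern, regarded as the design of a prefabric. Let $\gamma$ be a side-preserving glide-reflection symmetry of $F$ whose axis runs diagonally (at $45^\circ$ to the strands) through cell centres and whose glide is $k\delta$ for an integer $k$, where $\delta=\sqrt2$ is the length of a cell diagonal. (i) If $k$ is even and the axis passes through irredundant cells, or $k$ is odd and the axis passes through redundant cells, then the prefabric with design $P$ has a side-preserving glide-reflection with the same axis and glide. (ii) If $k$ is even and the axis passes through redundant cells, or $k$ is odd and the axis passes through irredundant cells, then the prefabric with design $P$ has a side-reversing glide-reflection with the same axis and glide.
   Context: The plane is divided into unit square cells by a square grid. A prefabric consists of vertical strands (warps, columns of cells) and horizontal strands (wefts, rows of cells), with a specification in every cell of which strand is uppermost when viewed from the obverse. Its design colours a cell dark if the warp is uppermost and pale if the weft is uppermost; any dark/pale colouring of the cells, regarded as a design, determines a prefabric. A prefabric is periodic if invariant under two linearly independent translations; its order is the period of the up/down sequence along a strand. A symmetry is an isometry of the plane preserving the grid and the prefabric, possibly composed with side reversal $\tau$ (reflection in the plane of the prefabric, interchanging which strand is uppermost in every cell); symmetries without $\tau$ are side-preserving, those with $\tau$ side-reversing. $G_1$ is the symmetry group and $H_1$ its side-preserving subgroup. A fabric is a prefabric that does not fall apart, where a prefabric falls apart if some nonempty proper subset $S$ of the strands is uppermost at every crossing of a strand of $S$ with a strand outside $S$. Thin striping colours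 warps alternately dark and pale and wefts alternately dark and pale; the pattern colours each cell with the colour of the strand uppermost there. A cell is redundant if the warp and weft crossing there have the same colour and irredundant otherwise; these form a checkerboard, and a diagonal line through cell centres passes only through cells of one class. The colouring is perfect if every symmetry in $G_1$ maps all dark strands to dark strands and all pale strands to pale strands, or interchanges the two colour classes of strands. *)

(* Cells of the square grid are indexed by int * int:
   cell (x, y) lies in warp (column) x and weft (row) y; its centre is the
   lattice point (x, y).  A design/prefabric is D : int * int -> bool,
   D p = true  <=> p is dark <=> the warp is uppermost at p. *)
From mathcomp Require Import all_boot all_order all_algebra.
Set Implicit Arguments. Unset Strict Implicit. Unset Printing Implicit Defensive.
Import Order.TTheory GRing.Theory Num.Theory.
Local Open Scope ring_scope.

Definition cell := (int * int)%type.
Definition design := cell -> bool.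

(* Every isometry of the plane preserving the grid maps cell centres to cell
   centres; it is p |-> A p + t with A one of the 8 signed permutation
   matrices and t an integer vector.  We encode A by [swap] (exchange the two
   coordinates first) and the signs [sx], [sy]. *)
Record gisom := GIsom { swap : bool; sx : bool; sy : bool; tx : int; ty : int }.

Fixpoint gIn (h : gisom) (l : seq gisom) : Prop :=
  match l with nil => False | h0 :: t => h0 = h \/ gIn h t end.

Definition sgn (b : bool) (z : int) : int := if b then - z else z.

Definition gapp (g : gisom) (p : cell) : cell :=
  let uv := if swap g then (p.2, p.1) else p in
  (sgn (sx g) uv.1 + tx g, sgn (sy g) uv.2 + ty g).

Definition orient_rev (g : gisom) : bool := swap g (+) sx g (+) sy g.

(* a (proper) glide-reflection: orientation reversing, with nonzero glide
   (so that it is not an involution) *)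
Definition is_glide_reflection (g : gisom) : Prop :=
  orient_rev g /\ exists p, gapp g (gapp g p) <> p.

(* (g, tau) is a symmetry of the prefabric D; tau = true means composed with
   side reversal.  If g exchanges warp and weft directions, the strand on top
   at p becomes a strand of the other direction at g p. *)
Definition is_symmetry (D : design) (g : gisom) (tau : bool) : Prop :=
  forall p, D (gapp g p) = D p (+) swap g (+) tau.

Definition in_H1 (D : design) (g : gisom) : Prop := is_symmetry D g false.

Inductive strand := Warp of int | Weft of int.

Definition strand_img (g : gisom) (s : strand) : strand :=
  match s with
  | Warp i => if swap g then Weft (sgn (sy g) i + ty g) else Warp (sgn (sx g) i + tx g)
  | Weft j => if swap g then Warp (sgn (sx g) j + tx g) else Weft (sgn (sy g) j + ty g)
  end.

Definition periodic (D : design) : Prop :=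
  exists a b c d : int, a * d - b * c != 0 /\
    (forall x y, D (x + a, y + b) = D (x, y)) /\
    (forall x y, D (x + c, y + d) = D (x, y)).

Definition strand_period (D : design) (s : strand) (p : int) : Prop :=
  match s with
  | Warp i => forall y, D (i, y + p) = D (i, y)
  | Weft j => forall x, D (x + p, j) = D (x, j)
  end.

Definition order_gt (D : design) (n : nat) : Prop :=
  forall s (p : nat), (0 < p <= n)%N -> ~ strand_period D s p%:Z.

Definition falls_apart (D : design) : Prop :=
  exists (Sw Sf : int -> bool),
    ((exists i, Sw i) \/ (exists j, Sf j)) /\
    ((exists i, ~~ Sw i) \/ (exists j, ~~ Sf j)) /\
    (forall i j, Sw i -> ~~ Sf j -> D (i, j) = true) /\
    (forall i j, Sf j -> ~~ Sw i -> D (i, j) = false).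

Definition is_fabric (D : design) : Prop := ~ falls_apart D.

(* H_1 generated by side-preserving glide-reflections (inverses of
   glide-reflections are glide-reflections, so products suffice) *)
Definition H1_gen_by_glides (D : design) : Prop :=
  forall g, in_H1 D g ->
    exists l : seq gisom,
      (forall h, gIn h l -> is_glide_reflection h /\ in_H1 D h) /\
      (forall p, gapp g p = foldr (fun h q => gapp h q) p l).

Definition H1_transitive (D : design) : Prop :=
  forall s s', exists g, in_H1 D g /\ strand_img g s = s'.

(* thin striping: cw / cf give the colours (true = dark) of warps / wefts *)
Definition thin_striping (cw cf : int -> bool) : Prop :=
  (forall i, cw (i + 1) = ~~ cw i) /\ (forall j, cf (j + 1) = ~~ cf j).

Definition strand_col (cw cf : int -> bool) (s : strand) : bool :=
  match s with Warp i => cw i | Weft j => cf j end.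

Definition perfect (D : design) (cw cf : int -> bool) : Prop :=
  forall g tau, is_symmetry D g tau ->
    (forall s, strand_col cw cf (strand_img g s) = strand_col cw cf s) \/
    (forall s, strand_col cw cf (strand_img g s) = ~~ strand_col cw cf s).

Definition pattern (D : design) (cw cf : int -> bool) : design :=
  fun p => if D p then cw p.1 else cf p.2.

Definition redundant (cw cf : int -> bool) (p : cell) : bool := cw p.1 == cf p.2.

Definition on_axis (dir : bool) (c : int) (p : cell) : bool :=
  if dir then p.2 == p.1 + c else p.1 + p.2 == c.

(* reflection in that axis followed by translation k * (1, 1) resp. k * (1, -1),
   i.e. glide of length k * delta along the axis *)
Definition diag_glide (dir : bool) (c k : int) : gisom :=
  if dir then GIsom true false false (k - c) (c + k)
  else GIsom true true true (c + k) (c - k).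

Definition axis_irredundant (cw cf : int -> bool) dir c : Prop :=
  forall p, on_axis dir c p -> ~~ redundant cw cf p.
Definition axis_redundant (cw cf : int -> bool) dir c : Prop :=
  forall p, on_axis dir c p -> redundant cw cf p.

(* A side-preserving symmetry g of F carries the strand uppermost at p to the
   strand uppermost at g p, so if g shifts all strand colours by the same bit
   b it is a symmetry of the pattern, side-reversing exactly when b differs
   from the bit recording whether g exchanges warps and wefts.  A diagonal
   glide exchanges them; it sends the warp and the weft through an axis cell
   to strands k further on, so under thin striping b is the parity of k
   corrected by whether that cell is irredundant. *)
From mathcomp Require Import all_boot all_order all_algebra.
Set Implicit Arguments. Unset Strict Implicit. Unset Printing Implicit Defensive.
Import Order.TTheory GRing.Theory Num.Theory.
Local Open Scope ring_scope.

Lemma alternating_shift (f : int -> bool) :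
  (forall i, f (i + 1) = ~~ f i) -> forall a k, f (a + k) = f a (+) odd `|k|%N.
Proof.
move=> f_alt a k.
have shift_nat i (n : nat) : f (i + n%:Z) = f i (+) odd n.
  elim: n => [|n IHn]; first by rewrite addr0 addbF.
  by rewrite -addn1 PoszD addrA f_alt IHn addn1 /= addbN.
case: k => n; first exact: shift_nat.
have -> : f a = f ((a + Negz n) + n.+1%:Z) by rewrite NegzE addrNK.
by rewrite shift_nat /= -addbA addbb addbF.
Qed.

Definition upper (D : design) (p : cell) : strand :=
  if D p then Warp p.1 else Weft p.2.

Lemma pattern_upper (D : design) cw cf p :
  pattern D cw cf p = strand_col cw cf (upper D p).
Proof. by rewrite /pattern /upper; case: (D p). Qed.

Lemma upper_gapp (D : design) (g : gisom) p :
  is_symmetry D g false -> upper D (gapp g p) = strand_img g (upper D p).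
Proof.
move=> /(_ p) symg; rewrite /upper symg addbF.
by case: p symg => x y; case: g => [] [] [] [] tx ty /=; case: (D (x, y)).
Qed.

Lemma pattern_symmetry (D : design) cw cf (g : gisom) (b : bool) :
  is_symmetry D g false ->
  (forall s, strand_col cw cf (strand_img g s) = strand_col cw cf s (+) b) ->
  is_symmetry (pattern D cw cf) g (b (+) swap g).
Proof.
move=> symg colg p.
rewrite !pattern_upper upper_gapp // colg {colg symg}.
by case: (strand_col _ _ _); case: b; case: (swap g).
Qed.

Lemma diag_glide_strand_col cw cf dir c k (r : bool) :
  thin_striping cw cf ->
  (forall p, on_axis dir c p -> redundant cw cf p = r) ->
  forall s, strand_col cw cf (strand_img (diag_glide dir c k) s) =
            strand_col cw cf s (+) (odd `|k|%N (+) ~~ r).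
Proof.
move=> [/alternating_shift cw_shift /alternating_shift cf_shift] axis_r.
have swap_cols a b : on_axis dir c (a, b) -> cw a = cf b (+) ~~ r.
  by move=> /axis_r; rewrite /redundant /= => <-; case: (cw a); case: (cf b).
case: dir axis_r swap_cols => axis_r swap_cols [i | j] /=.
- rewrite addrA cf_shift (swap_cols i (i + c)) /on_axis //=.
  by case: (cf _); case: (odd _); case: (~~ r).
- rewrite addrCA addrC cw_shift (swap_cols (j - c) j) /on_axis /= ?subrK //.
  by case: (cf _); case: (odd _); case: (~~ r).
- rewrite addrA [- i + c]addrC cf_shift abszN (swap_cols i (c - i)) /on_axis /=.
    by case: (cf _); case: (odd _); case: (~~ r).
  by rewrite addrC subrK.
- rewrite addrA [- j + c]addrC cw_shift (swap_cols (c - j) j) /on_axis /= ?subrK //.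
  by case: (cf _); case: (odd _); case: (~~ r).
Qed.

Lemma pattern_diag_glide cw cf (D : design) dir c k (r : bool) :
  thin_striping cw cf -> is_symmetry D (diag_glide dir c k) false ->
  (forall p, on_axis dir c p -> redundant cw cf p = r) ->
  is_symmetry (pattern D cw cf) (diag_glide dir c k) (odd `|k|%N (+) r).
Proof.
move=> striping symg axis_r.
have := pattern_symmetry symg (diag_glide_strand_col k striping axis_r).
have -> : swap (diag_glide dir c k) = true by case: (dir).
by rewrite addbN addbT negbK.
Qed.

Theorem corollary3p2 (D : design) (cw cf : int -> bool)
  (dir : bool) (c k : int) :
  is_fabric D -> periodic D -> order_gt D 4 ->
  H1_gen_by_glides D -> H1_transitive D ->
  thin_striping cw cf -> perfect D cw cf ->
  is_symmetry D (diag_glide dir c k) false ->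
  ((~~ odd `|k|%N /\ axis_irredundant cw cf dir c) \/
   (odd `|k|%N /\ axis_redundant cw cf dir c) ->
     is_symmetry (pattern D cw cf) (diag_glide dir c k) false) /\
  ((~~ odd `|k|%N /\ axis_redundant cw cf dir c) \/
   (odd `|k|%N /\ axis_irredundant cw cf dir c) ->
     is_symmetry (pattern D cw cf) (diag_glide dir c k) true).
Proof.
move=> _ _ _ _ _ striping _ symg.
have irr_axis : axis_irredundant cw cf dir c ->
    forall p, on_axis dir c p -> redundant cw cf p = false.
  by move=> axis_irr p /axis_irr /negbTE.
have pattern_irr := pattern_diag_glide striping symg (r := false).
have pattern_red := pattern_diag_glide striping symg (r := true).
split; case=> [[/negbTE k_par axis] | [k_par axis]].
- by move: (pattern_irr (irr_axis axis)); rewrite k_par.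
- by move: (pattern_red axis); rewrite k_par.
- by move: (pattern_red axis); rewrite k_par.
- by move: (pattern_irr (irr_axis axis)); rewrite k_par.
Qed.
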